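(* Let $g(v;a)=v(1-v)(v-a)$, $k>0$, $a\in(0,1)$, and $$d_0(a,k)=\frac{1}{k+1}\min\{k\,d^+(a,k),\,d^-(a)\},\quad d^-(a)=\max_{y\in(a,1)}\frac{g(y;a)}{y},\quad d^+(a,k)=\max_{y\in(1-a,1)}\frac{-g(1-y;a)}{ky}.$$ Then for every $0<d<d_0(a,k)$ the following condition holds: with $h(v)=(k+1)v-\frac1d g(v;a)$, there exist $y_0\in(0,a)$ and $y_1\in(a,1)$ such that $h(y_0)>k+1$, $h(y_1)<0$, and $h'(v)>0$ for all $v\in(0,y_0)\cup(y_1,1)$. *)

From Stdlib Require Import Reals.
From Coquelicot Require Import Coquelicot.
Open Scope R_scope.

Definition g (v a : R) : R := v * (1 - v) * (v - a).

(* d^-(a) = max_{y in (a,1)} g(y;a)/y, taken as the supremum of that set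
   (the maximum is attained, so sup = max). *)
Definition d_minus (a : R) : R :=
  real (Lub_Rbar (fun x => exists y, a < y < 1 /\ x = g y a / y)).

Definition d_plus (a k : R) : R :=
  real (Lub_Rbar (fun x => exists y, 1 - a < y < 1 /\ x = - g (1 - y) a / (k * y))).

Definition d0 (a k : R) : R := / (k + 1) * Rmin (k * d_plus a k) (d_minus a).

Definition h (a k d : R) (v : R) : R := (k + 1) * v - / d * g v a.

(* Multiplied by d, h becomes the cubic P(v) = d(k+1) v - g(v;a) = v^3 - (1+a) v^2 + (a + d(k+1)) v.
   The bound d (k+1) < d^-(a) yields q in (a,1) with P(q) < 0, and d (k+1) < k d^+(a,k) yields
   p in (0,a) with P(p) > d(k+1).  The first forces the discriminant of P' to be positive, so P has a
   local maximum r1 > 0 and a local minimum r2 < 1, and P is increasing outside [r1, r2].  Since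
   P(r1) >= P(p) and P(r2) <= P(q), the points y0 = min(p, r1) and y1 = max(q, r2) work. *)
From Stdlib Require Import Reals Lra Psatz Classical.
From Coquelicot Require Import Coquelicot.
Open Scope R_scope.

Definition cubic (s c v : R) : R := v ^ 3 - s * v ^ 2 + c * v.

Definition cubic_deriv (s c v : R) : R := 3 * v ^ 2 - 2 * s * v + c.

Lemma cubic_sub_crit (s c x r : R) : cubic_deriv s c r = 0 ->
  cubic s c x - cubic s c r = (x - r) ^ 2 * (x + 2 * r - s).
Proof.
  unfold cubic, cubic_deriv; intros Hr.
  replace c with (2 * s * r - 3 * r ^ 2) by lra; ring.
Qed.

Lemma cubic_neg_discr (s c x : R) : 0 < x -> cubic s c x < 0 -> 4 * c < s ^ 2.
Proof.
  unfold cubic; intros Hx Hneg.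
  assert (Hquad : x ^ 2 - s * x + c < 0) by nra.
  assert (Hsq : 0 <= (2 * x - s) ^ 2) by apply pow2_ge_0.
  nra.
Qed.

Section CubicCriticalPoints.

Variables s c : R.
Hypothesis real_crit : 3 * c <= s ^ 2.

Definition crit_lo : R := (s - sqrt (s ^ 2 - 3 * c)) / 3.
Definition crit_hi : R := (s + sqrt (s ^ 2 - 3 * c)) / 3.

Lemma sqrt_crit_disc_sq : sqrt (s ^ 2 - 3 * c) ^ 2 = s ^ 2 - 3 * c.
Proof. apply pow2_sqrt; lra. Qed.

Lemma cubic_deriv_factor (v : R) :
  cubic_deriv s c v = 3 * (v - crit_lo) * (v - crit_hi).
Proof.
  pose proof sqrt_crit_disc_sq as HD.
  unfold cubic_deriv, crit_lo, crit_hi.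
  set (D := sqrt (s ^ 2 - 3 * c)) in HD |- *.
  replace c with ((s ^ 2 - D ^ 2) / 3) at 1 by lra; field.
Qed.

Lemma cubic_deriv_pos (v : R) :
  v < crit_lo \/ crit_hi < v -> 0 < cubic_deriv s c v.
Proof.
  assert (Hle : crit_lo <= crit_hi).
  { unfold crit_lo, crit_hi; pose proof (sqrt_pos (s ^ 2 - 3 * c)); lra. }
  rewrite cubic_deriv_factor; intros [Hv | Hv]; nra.
Qed.

Lemma crit_lo_pos : 0 < s -> 0 < c -> 0 < crit_lo.
Proof.
  intros Hs Hc; pose proof sqrt_crit_disc_sq as HD.
  pose proof (sqrt_pos (s ^ 2 - 3 * c)) as HD0; unfold crit_lo; nra.
Qed.

Lemma crit_hi_lt (x : R) : s / 3 <= x -> 0 < cubic_deriv s c x -> crit_hi < x.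
Proof.
  pose proof (sqrt_pos (s ^ 2 - 3 * c)) as HD0.
  rewrite cubic_deriv_factor; unfold crit_lo, crit_hi in *; intros Hx Hpos; nra.
Qed.

Hypothesis real_quad_roots : 4 * c <= s ^ 2.

Lemma sqrt_crit_disc_ge : s / 2 <= sqrt (s ^ 2 - 3 * c).
Proof.
  pose proof sqrt_crit_disc_sq as HD; pose proof (sqrt_pos (s ^ 2 - 3 * c)) as HD0; nra.
Qed.

(* By cubic_sub_crit, cubic x <= cubic crit_lo iff x <= s - 2 crit_lo, and s - 2 crit_lo >= 2s/3
   when 4c <= s^2; dually for crit_hi with the threshold s - 2 crit_hi <= 0. *)
Lemma cubic_le_crit_lo (x : R) : x <= 2 * s / 3 -> cubic s c x <= cubic s c crit_lo.
Proof.
  intros Hx; pose proof sqrt_crit_disc_ge as HD.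
  assert (Hcrit : cubic_deriv s c crit_lo = 0) by (rewrite cubic_deriv_factor; ring).
  pose proof cubic_sub_crit s c x crit_lo Hcrit as Hsub.
  assert (Hfac : x + 2 * crit_lo - s <= 0) by (unfold crit_lo; lra).
  pose proof (pow2_ge_0 (x - crit_lo)) as Hsq; nra.
Qed.

Lemma cubic_ge_crit_hi (x : R) : 0 <= x -> cubic s c crit_hi <= cubic s c x.
Proof.
  intros Hx; pose proof sqrt_crit_disc_ge as HD.
  assert (Hcrit : cubic_deriv s c crit_hi = 0) by (rewrite cubic_deriv_factor; ring).
  pose proof cubic_sub_crit s c x crit_hi Hcrit as Hsub.
  assert (Hfac : 0 <= x + 2 * crit_hi - s) by (unfold crit_hi; lra).
  pose proof (pow2_ge_0 (x - crit_hi)) as Hsq; nra.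
Qed.

Lemma cubic_le_Rmin_crit_lo (x : R) :
  x <= 2 * s / 3 -> cubic s c x <= cubic s c (Rmin x crit_lo).
Proof.
  intros Hx; unfold Rmin; destruct (Rle_dec x crit_lo).
  - lra.
  - apply cubic_le_crit_lo; exact Hx.
Qed.

Lemma cubic_Rmax_crit_hi_le (x : R) :
  0 <= x -> cubic s c (Rmax x crit_hi) <= cubic s c x.
Proof.
  intros Hx; unfold Rmax; destruct (Rle_dec x crit_hi).
  - apply cubic_ge_crit_hi; exact Hx.
  - lra.
Qed.

End CubicCriticalPoints.

Lemma Lub_Rbar_ex_gt (E : R -> Prop) (c : R) :
  0 <= c -> c < real (Lub_Rbar E) -> exists x, E x /\ c < x.
Proof.
  intros Hc Hlt; apply NNPP; intros Hnone.
  destruct (Lub_Rbar_correct E) as [_ Hleast].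
  assert (Hub : Rbar_le (Lub_Rbar E) c).
  { apply Hleast; intros x Ex; apply Rnot_lt_le; intros Hx; apply Hnone; eauto. }
  destruct (Lub_Rbar E); simpl in *; lra.
Qed.

Lemma cubic_g (a K v : R) : cubic (1 + a) (a + K) v = K * v - g v a.
Proof. unfold cubic, g; ring. Qed.

Lemma h_cubic (a k d v : R) : d <> 0 ->
  d * h a k d v = cubic (1 + a) (a + d * (k + 1)) v.
Proof. intros Hd; rewrite cubic_g; unfold h; field; exact Hd. Qed.

Lemma Derive_h_cubic (a k d v : R) : d <> 0 ->
  d * Derive (h a k d) v = cubic_deriv (1 + a) (a + d * (k + 1)) v.
Proof.
  intros Hd.
  assert (E : Derive (h a k d) v = (k + 1) - / d * (-3 * v ^ 2 + 2 * (1 + a) * v - a)).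
  { apply is_derive_unique; unfold h, g; auto_derive; [exact I | ring]. }
  rewrite E; unfold cubic_deriv; field; exact Hd.
Qed.

Lemma lt_d0 (a k d : R) : 0 < k -> d < d0 a k ->
  d * (k + 1) < d_minus a /\ d * (k + 1) < k * d_plus a k.
Proof.
  unfold d0; intros Hk Hd.
  assert (Hmin : d * (k + 1) < Rmin (k * d_plus a k) (d_minus a)).
  { apply (Rmult_lt_compat_r (k + 1)) in Hd; [|lra].
    replace (/ (k + 1) * _ * (k + 1)) with (Rmin (k * d_plus a k) (d_minus a)) in Hd
      by (field; lra).
    exact Hd. }
  pose proof (Rmin_l (k * d_plus a k) (d_minus a)).
  pose proof (Rmin_r (k * d_plus a k) (d_minus a)).
  lra.
Qed.

Lemma ex_cubic_neg (a K : R) : 0 <= a -> 0 <= K -> K < d_minus a ->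
  exists q, a < q < 1 /\ cubic (1 + a) (a + K) q < 0.
Proof.
  intros Ha HK Hlt.
  destruct (Lub_Rbar_ex_gt _ _ HK Hlt) as [x [[q [Hq ->]] Hx]].
  exists q; split; [exact Hq|].
  rewrite cubic_g.
  replace (g q a / q) with ((1 - q) * (q - a)) in Hx by (unfold g; field; lra).
  unfold g; nra.
Qed.

Lemma ex_cubic_gt (a k K : R) : a <= 1 -> 0 < k -> 0 <= K -> K < k * d_plus a k ->
  exists p, 0 < p < a /\ K < cubic (1 + a) (a + K) p.
Proof.
  intros Ha Hk HK Hlt.
  assert (HKk : 0 <= K / k) by (apply Rdiv_le_0_compat; lra).
  assert (Hlt' : K / k < d_plus a k) by (apply Rlt_div_l; lra).
  destruct (Lub_Rbar_ex_gt _ _ HKk Hlt') as [x [[y [Hy ->]] Hx]].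
  exists (1 - y); split; [lra|].
  assert (Hky : 0 < k * y) by nra.
  assert (Hg : K * y < - g (1 - y) a).
  { apply (Rmult_lt_compat_r (k * y)) in Hx; [|exact Hky].
    replace (K / k * (k * y)) with (K * y) in Hx by (field; lra).
    replace (- g (1 - y) a / (k * y) * (k * y)) with (- g (1 - y) a) in Hx by (field; lra).
    exact Hx. }
  rewrite cubic_g; lra.
Qed.

Theorem lemma8p4 (a k d : R) (hk : 0 < k) (ha : 0 < a < 1)
  (hd0 : 0 < d) (hd1 : d < d0 a k) :
  exists y0 y1 : R,
    0 < y0 < a /\ a < y1 < 1 /\
    h a k d y0 > k + 1 /\ h a k d y1 < 0 /\
    (forall v : R, (0 < v < y0 \/ y1 < v < 1) -> Derive (h a k d) v > 0).
Proof.
  assert (Hdn : d <> 0) by lra.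
  assert (HK : 0 < d * (k + 1)) by nra.
  destruct (lt_d0 a k d hk hd1) as [Hminus Hplus].
  destruct (ex_cubic_neg a (d * (k + 1)) ltac:(lra) ltac:(lra) Hminus) as [q [Hq Pq]].
  destruct (ex_cubic_gt a k (d * (k + 1)) ltac:(lra) hk ltac:(lra) Hplus) as [p [Hp Pp]].
  set (s := 1 + a) in Pq, Pp; set (c := a + d * (k + 1)) in Pq, Pp.
  assert (Hs : 0 < s) by (unfold s; lra).
  assert (Hc : 0 < c) by (unfold c; lra).
  assert (Hdisc : 4 * c <= s ^ 2) by (apply Rlt_le, (cubic_neg_discr s c q); lra).
  assert (Hlo : 0 < crit_lo s c) by (apply crit_lo_pos; lra).
  assert (Hhi : crit_hi s c < 1).
  { apply crit_hi_lt; [lra | unfold s; lra | unfold cubic_deriv, s, c; lra]. }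
  exists (Rmin p (crit_lo s c)), (Rmax q (crit_hi s c)).
  pose proof (Rmin_l p (crit_lo s c)); pose proof (Rmin_r p (crit_lo s c)).
  pose proof (Rmax_l q (crit_hi s c)); pose proof (Rmax_r q (crit_hi s c)).
  repeat split; try lra.
  - apply Rmin_glb_lt; lra.
  - apply Rmax_lub_lt; lra.
  - apply (Rmult_lt_reg_l d); [lra|]; rewrite h_cubic by (exact Hdn); fold s c.
    pose proof (cubic_le_Rmin_crit_lo s c ltac:(lra) Hdisc p ltac:(unfold s; lra)); lra.
  - apply (Rmult_lt_reg_l d); [lra|]; rewrite h_cubic by (exact Hdn); fold s c.
    pose proof (cubic_Rmax_crit_hi_le s c ltac:(lra) Hdisc q ltac:(lra)); lra.
  - intros v Hv; apply (Rmult_lt_reg_l d); [lra|].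
    rewrite Rmult_0_r, Derive_h_cubic by (exact Hdn); fold s c.
    apply cubic_deriv_pos; [lra | lra].
Qed.
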